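(* For $m,n\geq 0$ and $\lambda,\kappa\in\mathbf{k}$, in $\text{Ш}_e(\mathbf{k})$ we have $$\mathbf{1}^{\otimes(m+1)}\diamond\mathbf{1}^{\otimes(n+1)}=\sum_{r=0}^{\min\{m,n\}}\sum_{i=0}^{r}\binom{m+n-r}{m}\binom{m}{r}\binom{r}{i}\lambda^{r-i}\kappa^i\,\mathbf{1}^{\otimes(m+n+1-r-i)}.$$ Equivalently, $$\mathbf{1}^{\otimes(m+1)}\diamond\mathbf{1}^{\otimes(n+1)}=\sum_{\ell=0}^{2\min\{m,n\}}\sum_{i=0}^{\ell}\binom{m+n-\ell+i}{m}\binom{m}{\ell-i}\binom{\ell-i}{i}\lambda^{\ell-2i}\kappa^i\,\mathbf{1}^{\otimes(m+n+1-\ell)}.$$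
   Context: $\mathbf{k}$ is a commutative unitary ring and $\mathbf{1}$ its identity. $\text{Ш}_e(\mathbf{k})=\bigoplus_{n\geq0}\mathbf{k}^{\otimes(n+1)}=\bigoplus_{n\ge0}\mathbf{k}\,\mathbf{1}^{\otimes(n+1)}$, with product $\diamond$ defined recursively (for a commutative algebra $A$, here $A=\mathbf{k}$) on pure tensors $\mathfrak{a}=a_0\otimes\mathfrak{a}'\in A^{\otimes(m+1)}$, $\mathfrak{b}=b_0\otimes\mathfrak{b}'\in A^{\otimes(n+1)}$ by: $\mathfrak{a}\diamond\mathfrak{b}=a_0b_0$ if $m=n=0$; $a_0b_0\otimes\mathfrak{b}'$ if $m=0,n\ge1$; $a_0b_0\otimes\mathfrak{a}'$ if $m\ge1,n=0$; and for $m,n\ge1$, $a_0b_0\otimes\big(\mathfrak{a}'\diamond(1\otimes\mathfrak{b}')+(1\otimes\mathfrak{a}')\diamond\mathfrak{b}'+\lambda(\mathfrak{a}'\diamond\mathfrak{b}')\big)+\kappa a_0b_0(\mathfrak{a}'\diamond\mathfrak{b}')$. Binomial coefficients with out-of-range lower index are $0$. *)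

From HB Require Import structures.
From mathcomp Require Import all_boot all_order all_algebra.
Set Implicit Arguments. Unset Strict Implicit. Unset Printing Implicit Defensive.
Import GRing.Theory.
Local Open Scope ring_scope.

(* Ш_e(k) = ⊕_{n>=0} k^{⊗(n+1)} = ⊕_n k 1^{⊗(n+1)} is modelled as {poly R}:
   the basis vector 1^{⊗(n+1)} is 'X^n, and the operation x ↦ 1 ⊗ x
   (prepending a tensor factor 1) is multiplication by 'X. *)

Fixpoint shd (R : comNzRingType) (lam kap : R) (m : nat) : nat -> {poly R} :=
  match m with
  | 0 => fun n => 'X^n
  | m'.+1 => fix inner (n : nat) : {poly R} :=
      match n with
      | 0 => 'X^(m'.+1)
      | n'.+1 =>
          (shd lam kap m' n'.+1 + inner n' + lam *: shd lam kap m' n') * 'X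
          + kap *: shd lam kap m' n'
      end
  end.

Definition diamond (R : comNzRingType) (lam kap : R) (p q : {poly R}) : {poly R} :=
  \sum_(i < size p) \sum_(j < size q) (p`_i * q`_j) *: shd lam kap i j.

Definition one_tens (R : comNzRingType) (n : nat) : {poly R} := 'X^n.

From HB Require Import structures.
From mathcomp Require Import all_boot all_order all_algebra.
From mathcomp Require Import ring zify.
Import GRing.Theory.
Local Open Scope ring_scope.

(* With 1^{⊗(n+1)} read as X^n, the recursion for D(m,n) = 1^{⊗(m+1)} ⋄ 1^{⊗(n+1)}
   becomes D(m+1,n+1) = X D(m,n+1) + X D(m+1,n) + (λX + κ) D(m,n), with
   D(0,n) = X^n and D(m,0) = X^m.  It is solved by
   D(m,n) = Σ_r C(m+n-r,m) C(m,r) (λX + κ)^r X^(m+n-2r), because the coefficients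
   C(m+n-r,m) C(m,r) obey the same three-term recursion (Pascal's rule twice).
   Expanding (λX + κ)^r binomially gives the first formula; the second is the same
   double sum regrouped along the antidiagonals l = r + i. *)

Lemma big_nat_trunc {V : nmodType} (F : nat -> V) {a b : nat} : (a <= b)%N ->
  (forall r, (a <= r < b)%N -> F r = 0) ->
  \sum_(0 <= r < b) F r = \sum_(0 <= r < a) F r.
Proof.
move=> le_ab F0; rewrite (big_cat_nat (leq0n a) le_ab) /= [X in _ + X]big_nat.
by rewrite [X in _ + X]big1 ?addr0.
Qed.

Lemma big_nat_antidiagonal (V : nmodType) (N : nat) (F : nat -> nat -> V) :
  \sum_(0 <= l < N) \sum_(0 <= i < l.+1) F (l - i)%N i =
  \sum_(0 <= r < N) \sum_(0 <= i < N - r) F r i.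
Proof.
elim: N => [|N IHN]; first by rewrite !big_geq.
have diagN : \sum_(0 <= i < N.+1) F (N - i)%N i = \sum_(0 <= r < N.+1) F r (N - r)%N.
  by rewrite big_nat_rev; apply: eq_big_nat => i /andP[_ ltiN]; rewrite add0n subSS subKn.
have rowS r : (0 <= r < N.+1)%N ->
    \sum_(0 <= i < N.+1 - r) F r i = \sum_(0 <= i < N - r) F r i + F r (N - r)%N.
  by move=> /andP[_ le_rN]; rewrite subSn // big_nat_recr.
rewrite big_nat_recr //= IHN diagN (big_nat_widen 0 N N.+1) //.
rewrite (eq_big_nat _ _ rowS) big_split /= big_mkcond /=; congr (_ + _).
apply: eq_big_nat => r /andP[_ le_rN]; case: ltnP => // le_Nr.
by rewrite (_ : r = N) ?subnn ?big_geq //; lia.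
Qed.

Definition shd_coef (m n r : nat) : nat := 'C(m + n - r, m) * 'C(m, r).

Lemma shd_coef_eq0 m n r : (minn m n < r)%N -> shd_coef m n r = 0%N.
Proof.
rewrite /shd_coef; have [le_rm | lt_mr] := leqP r m; last by rewrite (bin_small lt_mr) muln0.
by rewrite gtn_min ltnNge le_rm /= => lt_nr; rewrite bin_small //; lia.
Qed.

Lemma shd_coefSS m n r :
  shd_coef m.+1 n.+1 r.+1 = (shd_coef m n.+1 r.+1 + shd_coef m.+1 n r.+1 + shd_coef m n r)%N.
Proof.
have [lt_mn_r | le_r_mn] := ltnP (m + n) r.
  by rewrite !shd_coef_eq0 //; lia.
rewrite /shd_coef !addSn !addnS !subSS subSn // binS (binS m r); ring.
Qed.

Lemma shd_coefS0 m n : shd_coef m.+1 n.+1 0 = (shd_coef m n.+1 0 + shd_coef m.+1 n 0)%N.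
Proof. by rewrite /shd_coef !subn0 !bin0 !muln1 !addSn !addnS binS addnC. Qed.

Section ClosedForm.
Variables (R : comNzRingType) (lam kap : R).

Let c : {poly R} := lam *: 'X + kap%:P.

Lemma shdSS m n :
  shd lam kap m.+1 n.+1 =
  (shd lam kap m n.+1 + shd lam kap m.+1 n + lam *: shd lam kap m n) * 'X
    + kap *: shd lam kap m n.
Proof. by []. Qed.

Definition shd_term m n r : {poly R} := c ^+ r * 'X^(m - r + (n - r)) *+ shd_coef m n r.

Definition shd_closed m n : {poly R} := \sum_(0 <= r < (minn m n).+1) shd_term m n r.

Lemma shd_closedE N m n : (minn m n < N)%N ->
  shd_closed m n = \sum_(0 <= r < N) shd_term m n r.
Proof.
move=> lt_min_N; rewrite [RHS](big_nat_trunc _ lt_min_N) // => r /andP[lt_min_r _].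
by rewrite /shd_term shd_coef_eq0.
Qed.

Lemma shd_termSS m n r :
  shd_term m.+1 n.+1 r.+1 =
  'X * shd_term m n.+1 r.+1 + 'X * shd_term m.+1 n r.+1 + c * shd_term m n r.
Proof.
rewrite /shd_term shd_coefSS !mulrnDr !mulrnAr !subSS; congr (_ + _ + _).
- have [lt_rm | le_mr] := ltnP r m; last by rewrite /shd_coef (bin_small (n := m)) ?muln0.
  by rewrite mulrCA -exprS; congr (_ * 'X^_ *+ _); lia.
- have [lt_rn | le_nr] := ltnP r n; last by rewrite shd_coef_eq0 //; lia.
  by rewrite mulrCA -exprS; congr (_ * 'X^_ *+ _); lia.
- by rewrite mulrA -exprS.
Qed.

Lemma shd_termS0 m n :
  shd_term m.+1 n.+1 0 = 'X * shd_term m n.+1 0 + 'X * shd_term m.+1 n 0.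
Proof.
rewrite /shd_term shd_coefS0 !subn0 !expr0 !mul1r mulrnDr !mulrnAr -!exprS.
by rewrite addSn addnS.
Qed.

Lemma shd_closedSS m n :
  shd_closed m.+1 n.+1 =
  'X * shd_closed m n.+1 + 'X * shd_closed m.+1 n + c * shd_closed m n.
Proof.
rewrite (@shd_closedE m.+2 m.+1 n.+1) ?(@shd_closedE m.+2 m n.+1)
  ?(@shd_closedE m.+2 m.+1 n) ?(@shd_closedE m.+1 m n); [|lia..].
rewrite !(big_nat_recl m.+1 0) // shd_termS0.
under eq_big_nat => r _ do rewrite shd_termSS.
rewrite !big_split /= !mulrDr !mulr_sumr; ring.
Qed.

Lemma shd_closed0n n : shd_closed 0 n = 'X^n.
Proof. by rewrite /shd_closed min0n big_nat1 /shd_term /shd_coef !subn0 !bin0 mul1r. Qed.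

Lemma shd_closedn0 m : shd_closed m 0 = 'X^m.
Proof.
by rewrite /shd_closed minn0 big_nat1 /shd_term /shd_coef !subn0 addn0 binn bin0 mul1r.
Qed.

Lemma shd_closed_eq m n : shd lam kap m n = shd_closed m n.
Proof.
elim: m n => [|m IHm] n; first by rewrite shd_closed0n.
elim: n => [|n IHn]; first by rewrite shd_closedn0.
by rewrite shdSS shd_closedSS !IHm IHn /c -!mul_polyC; ring.
Qed.

Lemma diamond_XnXn m n : diamond lam kap 'X^m 'X^n = shd lam kap m n.
Proof.
rewrite /diamond size_polyXn big_ord_recr big1 /= => [|i _]; last first.
  by rewrite big1 // => j _; rewrite coefXn ltn_eqF ?mul0r ?scale0r.
rewrite size_polyXn big_ord_recr big1 /= => [|j _]; last first.
  by rewrite [_`_j]coefXn ltn_eqF ?mulr0 ?scale0r.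
by rewrite !add0r !coefXn !eqxx mulr1 scale1r.
Qed.

Lemma shd_term_expand m n r : (r <= minn m n)%N ->
  shd_term m n r =
  \sum_(0 <= i < r.+1) ('C(m + n - r, m) * 'C(m, r) * 'C(r, i))%:R
      * (lam ^+ (r - i) * kap ^+ i) *: 'X^(m + n - r - i).
Proof.
rewrite leq_min => /andP[le_rm le_rn].
rewrite /shd_term /c exprDn big_mkord mulr_suml -sumrMnl; apply: eq_bigr => i _.
have le_ir : (i <= r)%N by rewrite -ltnS.
have -> : (m + n - r - i = (r - i) + (m - r + (n - r)))%N by lia.
(* [ring] fails on exponents containing truncated subtractions: make them atoms. *)
rewrite /shd_coef; move: (r - i)%N (m - r + (n - r))%N => a b.
rewrite exprD exprZn -!mul_polyC !polyCM polyC_natr !(rmorphXn polyC); ring.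
Qed.

Lemma shd_expand m n :
  shd lam kap m n =
  \sum_(0 <= r < (minn m n).+1) \sum_(0 <= i < r.+1)
    ('C(m + n - r, m) * 'C(m, r) * 'C(r, i))%:R * (lam ^+ (r - i) * kap ^+ i)
      *: 'X^(m + n - r - i).
Proof.
rewrite shd_closed_eq; apply: eq_big_nat => r /andP[_ le_r_min].
by rewrite shd_term_expand.
Qed.

Lemma shd_expand_antidiagonal m n :
  shd lam kap m n =
  \sum_(0 <= l < (minn m n).*2.+1) \sum_(0 <= i < l.+1)
    ('C(m + n - l + i, m) * 'C(m, l - i) * 'C(l - i, i))%:R
      * (lam ^+ (l - i.*2) * kap ^+ i) *: 'X^(m + n - l).
Proof.
set k := minn m n.
pose F r i := ('C(m + n - r, m) * 'C(m, r) * 'C(r, i))%:R * (lam ^+ (r - i) * kap ^+ i)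
                *: 'X^(m + n - r - i) : {poly R}.
transitivity (\sum_(0 <= l < k.*2.+1) \sum_(0 <= i < l.+1) F (l - i)%N i); last first.
  apply: eq_big_nat => l /andP[_ lt_l]; apply: eq_big_nat => i /andP[_ lt_i].
  by rewrite /F; congr (('C(_, m) * _ * _)%:R * (lam ^+ _ * _) *: 'X^_); lia.
have le_k_2k : (k.+1 <= k.*2.+1)%N by rewrite ltnS -addnn leq_addr.
rewrite big_nat_antidiagonal shd_expand (big_nat_trunc _ le_k_2k); last first.
  move=> r /andP[lt_k_r _]; rewrite big1 // => i _.
  move: (@shd_coef_eq0 m n r lt_k_r); rewrite /F /shd_coef => ->.
  by rewrite mul0n mul0r scale0r.
apply: eq_big_nat => r /andP[_ le_r_k]; rewrite ltnS in le_r_k.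
have le_r_2k : (r.+1 <= k.*2.+1 - r)%N by lia.
rewrite (big_nat_trunc _ le_r_2k) // => i /andP[lt_r_i _].
by rewrite /F (bin_small lt_r_i) muln0 mul0r scale0r.
Qed.

End ClosedForm.

Theorem proposition3p4 (R : comNzRingType) (lam kap : R) (m n : nat) :
  diamond lam kap (one_tens R m) (one_tens R n) =
    \sum_(0 <= r < (minn m n).+1) \sum_(0 <= i < r.+1)
      ('C(m + n - r, m) * 'C(m, r) * 'C(r, i))%:R * (lam ^+ (r - i) * kap ^+ i)
        *: one_tens R (m + n - r - i)
  /\
  diamond lam kap (one_tens R m) (one_tens R n) =
    \sum_(0 <= l < (minn m n).*2.+1) \sum_(0 <= i < l.+1)
      ('C(m + n - l + i, m) * 'C(m, l - i) * 'C(l - i, i))%:R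
        * (lam ^+ (l - i.*2) * kap ^+ i)
        *: one_tens R (m + n - l).
Proof.
rewrite /one_tens diamond_XnXn.
by split; [exact: shd_expand | exact: shd_expand_antidiagonal].
Qed.
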